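(* Let $S$ be a closed densely defined symmetric operator on a Hilbert space $\mathcal{H}$ and $V\ge0$ a bounded non-negative operator, and let $A:=S+iV$ with $\mathcal{D}(A)=\mathcal{D}(S)$. If $B$ is an operator extension of $A$ ($A\subset B$) that is dissipative, then $\mathcal{D}(B)\subset\mathcal{D}(S^* )$.
   Context: The inner product is antilinear in the first argument. A densely defined operator $B$ is dissipative if $\mathrm{Im}\langle\psi,B\psi\rangle\ge0$ for all $\psi\in\mathcal{D}(B)$. *)

From HB Require Import structures.
From mathcomp Require Import all_boot all_order all_algebra.
From mathcomp Require Import complex.
From mathcomp Require Import reals.
Set Implicit Arguments. Unset Strict Implicit. Unset Printing Implicit Defensive.
Import Order.TTheory GRing.Theory Num.Theory.
Local Open Scope ring_scope.

Section Hilbert.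
Variables (R : realType) (H : lmodType R[i]) (ip : H -> H -> R[i]).

(* inner product: antilinear in the first argument, linear in the second *)
Definition is_inner_product : Prop :=
  [/\ (forall x y z, ip x (y + z) = ip x y + ip x z),
      (forall (a : R[i]) x y, ip x (a *: y) = a * ip x y),
      (forall x y, ip y x = ((ip x y)^*)%C),
      (forall x, 0 <= ip x x) &
      (forall x, ip x x = 0 -> x = 0)].

Definition hnorm (x : H) : R := Num.sqrt (complex.Re (ip x x)).

Definition cvgH (u : nat -> H) (l : H) : Prop :=
  forall e : R, 0 < e -> exists N, forall n, (N <= n)%N -> hnorm (u n - l) < e.

Definition cauchyH (u : nat -> H) : Prop :=
  forall e : R, 0 < e -> exists N, forall m n, (N <= m)%N -> (N <= n)%N ->
    hnorm (u m - u n) < e.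

Definition is_hilbert : Prop :=
  is_inner_product /\ forall u, cauchyH u -> exists l, cvgH u l.

Definition subspace (D : H -> Prop) : Prop :=
  D 0 /\ forall (a : R[i]) x y, D x -> D y -> D (a *: x + y).

Definition is_linop (D : H -> Prop) (T : H -> H) : Prop :=
  subspace D /\
  forall (a : R[i]) x y, D x -> D y -> T (a *: x + y) = a *: T x + T y.

Definition densely_defined (D : H -> Prop) : Prop :=
  forall x (e : R), 0 < e -> exists y, D y /\ hnorm (x - y) < e.

Definition closed_op (D : H -> Prop) (T : H -> H) : Prop :=
  forall (u : nat -> H) x y, (forall n, D (u n)) -> cvgH u x ->
    cvgH (fun n => T (u n)) y -> D x /\ T x = y.

Definition symmetric_op (D : H -> Prop) (T : H -> H) : Prop :=
  forall x y, D x -> D y -> ip (T x) y = ip x (T y).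

Definition adjoint_dom (D : H -> Prop) (T : H -> H) (y : H) : Prop :=
  exists z, forall x, D x -> ip (T x) y = ip x z.

Definition bounded_op (V : H -> H) : Prop :=
  (forall (a : R[i]) x y, V (a *: x + y) = a *: V x + V y) /\
  exists M : R, forall x, hnorm (V x) <= M * hnorm x.

Definition nonneg_op (V : H -> H) : Prop := forall x, 0 <= ip x (V x).

Definition op_extends (DA : H -> Prop) (A : H -> H) (DB : H -> Prop) (B : H -> H) :=
  forall x, DA x -> DB x /\ B x = A x.

Definition dissipative (D : H -> Prop) (B : H -> H) : Prop :=
  forall psi, D psi -> 0 <= complex.Im (ip psi (B psi)).

End Hilbert.

(** Dissipativity of [B] at [x - 'i p], with [x \in D(B)] and [p \in D(S)],
    bounds [Re <x, S p>] from above by [a + b |p|^2]: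
    the symmetry of [S] kills the only term that is not controlled by [|p|^2].
    A linear functional with such a bound is represented by a vector [w], i.e.
    [<x, S p> = <w, p>], which says that [x] lies in the domain of [S^*].
    The representing vector is obtained by the Dirichlet principle: a minimizing
    sequence of the quadratic functional [b |y|^2 - Re <x, S y>] over [D(S)] is
    Cauchy by the parallelogram law, and the first variation at its limit gives
    the representation. *)
From HB Require Import structures.
From mathcomp Require Import all_boot all_order all_algebra.
From mathcomp Require Import complex.
From mathcomp Require Import boolp classical_sets reals.
From mathcomp Require Import ring lra.
Import Order.TTheory GRing.Theory Num.Theory.
Local Open Scope ring_scope.
Set Implicit Arguments. Unset Strict Implicit. Unset Printing Implicit Defensive.

Local Notation Re := complex.Re.
Local Notation Im := complex.Im.

Section ComplexParts.
Variable R : rcfType.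
Implicit Types x y : R[i].

Lemma RecD x y : Re (x + y) = Re x + Re y. Proof. by case: x; case: y. Qed.
Lemma ImcD x y : Im (x + y) = Im x + Im y. Proof. by case: x; case: y. Qed.
Lemma RecN x : Re (- x) = - Re x. Proof. by case: x. Qed.
Lemma RecM x y : Re (x * y) = Re x * Re y - Im x * Im y.
Proof. by case: x; case: y. Qed.
Lemma ImcM x y : Im (x * y) = Re x * Im y + Im x * Re y.
Proof. by case: x; case: y. Qed.
Lemma RecJ x : Re (x^*)%C = Re x. Proof. by case: x. Qed.
Lemma ImcJ x : Im (x^*)%C = - Im x. Proof. by case: x. Qed.

Lemma complex_eq x y : Re x = Re y -> Im x = Im y -> x = y.
Proof. by case: x; case: y => ? ? ? ? /= -> ->. Qed.

End ComplexParts.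

Lemma quadratic_ge0_discr (R : realFieldType) (al be ga : R) : 0 <= ga ->
  (forall t, 0 <= al + be * t + ga * t ^+ 2) -> be ^+ 2 <= 4 * al * ga.
Proof.
move=> ga_ge0 hq; have [ga0|ga_neq0] := eqVneq ga 0.
  suff -> : be = 0 by rewrite ga0 expr2 !mulr0.
  apply/eqP/negPn/negP => be_neq0.
  have := hq (- (al + 1) / be); rewrite ga0 mul0r addr0 mulrCA mulfV // mulr1; lra.
have ga_gt0 : 0 < ga by rewrite lt_def ga_neq0.
have := hq (- be / (2 * ga)); set t := - be / (2 * ga) => ht.
have gat : ga * t = - be / 2 by rewrite /t; field; apply/negP => /eqP; lra.
have : 0 <= 4 * ga * (al + be * t + ga * t ^+ 2) by apply: mulr_ge0 => //; lra.
have -> : 4 * ga * (al + be * t + ga * t ^+ 2)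
          = 4 * al * ga + 4 * be * (ga * t) + 4 * (ga * t) ^+ 2 by ring.
rewrite gat; nra.
Qed.

Lemma eq0_of_sqr_le_eps (R : realFieldType) (x C : R) :
  (forall e, 0 < e -> x ^+ 2 <= C * e) -> x = 0.
Proof.
move=> hx; have C_ge0 : 0 <= C by have := hx 1 ltr01; rewrite mulr1; nra.
apply/eqP; rewrite -sqrf_eq0 eq_le sqr_ge0 andbT leNgt; apply/negP => x2_gt0.
have e_gt0 : 0 < x ^+ 2 / (2 * C + 1) by apply: divr_gt0 => //; lra.
have := hx _ e_gt0; rewrite mulrA ler_pdivlMr; last lra.
nra.
Qed.

Lemma inv_succ_lt_eventually (R : archiRealFieldType) (e : R) : 0 < e ->
  exists N, forall n, (N <= n)%N -> n.+1%:R^-1 < e.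
Proof.
move=> e_gt0; exists (Num.Def.archi_bound e^-1) => n le_Nn.
have := @archi_boundP _ e^-1; rewrite invr_ge0 (ltW e_gt0) => /(_ isT) lt_bound.
rewrite -(ler_nat R) in le_Nn.
rewrite -ltf_pV2 ?posrE ?invr_gt0 ?ltr0n // invrK -natr1; lra.
Qed.

Section InnerProduct.
Variables (R : realType) (H : lmodType R[i]) (ip : H -> H -> R[i]).
Hypothesis ipP : is_inner_product ip.
Implicit Types (u v x y z : H) (a : R[i]).

Definition sqnorm x : R := Re (ip x x).

Lemma ipDr x y z : ip x (y + z) = ip x y + ip x z. Proof. by case: ipP. Qed.
Lemma ipZr a x y : ip x (a *: y) = a * ip x y. Proof. by case: ipP. Qed.
Lemma ipJ x y : ip y x = (ip x y)^*%C. Proof. by case: ipP. Qed.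

Lemma ipDl x y z : ip (y + z) x = ip y x + ip z x.
Proof. by rewrite !(ipJ x) ipDr rmorphD. Qed.

Lemma ipZl a x y : ip (a *: y) x = a^*%C * ip y x.
Proof. by rewrite !(ipJ x) ipZr rmorphM. Qed.

Lemma ipNr x y : ip x (- y) = - ip x y.
Proof. by rewrite -scaleN1r ipZr mulN1r. Qed.

Lemma ipNl x y : ip (- y) x = - ip y x.
Proof. by rewrite -scaleN1r ipZl rmorphN1 mulN1r. Qed.

Lemma ipBl x y z : ip (y - z) x = ip y x - ip z x.
Proof. by rewrite ipDl ipNl. Qed.

Lemma Re_ipJ x y : Re (ip y x) = Re (ip x y). Proof. by rewrite ipJ RecJ. Qed.
Lemma Im_ipJ x y : Im (ip y x) = - Im (ip x y). Proof. by rewrite ipJ ImcJ. Qed.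

Lemma Im_ip_self x : Im (ip x x) = 0.
Proof. by case: ipP => _ _ _ /(_ x); rewrite lecE => /andP[/eqP]. Qed.

Lemma sqnorm_ge0 x : 0 <= sqnorm x.
Proof. by case: ipP => _ _ _ /(_ x); rewrite lecE => /andP[]. Qed.

Lemma sqnormD u v : sqnorm (u + v) = sqnorm u + sqnorm v + 2 * Re (ip u v).
Proof. rewrite /sqnorm ipDl !ipDr !RecD Re_ipJ; ring. Qed.

Lemma sqnormB u v : sqnorm (u - v) = sqnorm u + sqnorm v - 2 * Re (ip u v).
Proof. by rewrite sqnormD /sqnorm ipNl !ipNr opprK RecN mulrN. Qed.

Lemma sqnormZ a u : sqnorm (a *: u) = (Re a ^+ 2 + Im a ^+ 2) * sqnorm u.
Proof.
by rewrite /sqnorm ipZl ipZr mulrA RecM Im_ip_self mulr0 subr0 RecM RecJ ImcJ; ring.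
Qed.

Lemma Re_ip_le u v : 2 * Re (ip u v) <= sqnorm u + sqnorm v.
Proof. by have := sqnorm_ge0 (u - v); rewrite sqnormB; lra. Qed.

Lemma Im_ip_le u v : 2 * Im (ip u v) <= sqnorm u + sqnorm v.
Proof.
have := Re_ip_le u ((- 'i%C) *: v).
by rewrite ipZr sqnormZ RecM /=; lra.
Qed.

Lemma Re_ip_sqr_le u v : Re (ip u v) ^+ 2 <= sqnorm u * sqnorm v.
Proof.
have quad_ge0 (t : R) : 0 <= sqnorm v + 2 * Re (ip u v) * t + sqnorm u * t ^+ 2.
  have := sqnorm_ge0 (t%:C%C *: u + v).
  by rewrite sqnormD sqnormZ ipZl RecM /=; lra.
have := quadratic_ge0_discr (sqnorm_ge0 u) quad_ge0; nra.
Qed.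

Lemma hnorm_lt x (e : R) : 0 < e -> (hnorm ip x < e) = (sqnorm x < e ^+ 2).
Proof.
move=> e_gt0; rewrite /hnorm -[X in _ < X](@gtr0_norm _ e) // -sqrtr_sqr ltr_sqrt //.
by rewrite exprn_gt0.
Qed.

Lemma sqnorm_le_of_hnorm_le (V : H -> H) (M : R) :
  (forall x, hnorm ip (V x) <= M * hnorm ip x) -> forall x, sqnorm (V x) <= M ^+ 2 * sqnorm x.
Proof.
move=> hV x; have := hV x; rewrite /hnorm.
rewrite -(sqr_sqrtr (sqnorm_ge0 x)) -(sqr_sqrtr (sqnorm_ge0 (V x))).
have := sqrtr_ge0 (sqnorm x); have := sqrtr_ge0 (sqnorm (V x)); rewrite /sqnorm; nra.
Qed.

End InnerProduct.

Section DirichletPrinciple.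
Variables (R : realType) (H : lmodType R[i]) (ip : H -> H -> R[i]).
Hypotheses (ipP : is_inner_product ip)
  (complete : forall u, cauchyH ip u -> exists l, cvgH ip u l).
Variables (D : H -> Prop) (g : H -> R) (a b : R).
Hypotheses (D_subspace : subspace D)
  (g_linear : forall (t : R) x y, D x -> D y -> g (t%:C%C *: x + y) = t * g x + g y)
  (b_gt0 : 0 < b) (g_le : forall y, D y -> g y <= a + b * sqnorm ip y).

Let D0 : D 0. Proof. by case: D_subspace. Qed.

Let D_add x y : D x -> D y -> D (x + y).
Proof. by case: D_subspace => _ D_lin Dx Dy; have := D_lin 1 x y Dx Dy; rewrite scale1r. Qed.

Let D_scale (c : R[i]) x : D x -> D (c *: x).
Proof. by case: D_subspace => _ D_lin Dx; have := D_lin c x 0 Dx D0; rewrite addr0. Qed.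

Let g0 : g 0 = 0.
Proof.
have := g_linear 1 D0 D0; rewrite scale1r addr0 mul1r => /eqP.
by rewrite -subr_eq subrr => /eqP.
Qed.

Let gD x y : D x -> D y -> g (x + y) = g x + g y.
Proof. by move=> Dx Dy; have := g_linear 1 Dx Dy; rewrite scale1r mul1r. Qed.

Let gZ (t : R) x : D x -> g (t%:C%C *: x) = t * g x.
Proof. by move=> Dx; have := g_linear t Dx D0; rewrite !addr0 g0 addr0. Qed.

Let J y := b * sqnorm ip y - g y.
Let m := inf [set J y | y in D].

Let J_has_inf : has_inf [set J y | y in D].
Proof.
split; first by exists (J 0), 0.
by exists (- a) => _ [z Dz <-]; have := g_le Dz; rewrite /J; lra.
Qed.

Let J_ge_inf y : D y -> m <= J y.
Proof. by move=> Dy; apply: (ge_inf J_has_inf.2); exists y. Qed.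

Let minimizing_seq : exists y : nat -> H, forall n, D (y n) /\ J (y n) < m + n.+1%:R^-1.
Proof.
have near_inf n : exists y, D y /\ J y < m + n.+1%:R^-1.
  have inv_gt0 : 0 < n.+1%:R^-1 :> R by rewrite invr_gt0.
  by have [_ [y Dy <-] ?] := inf_adherent inv_gt0 J_has_inf; exists y.
by have [y ?] := choice near_inf; exists y.
Qed.

Let J_midpoint y z : D y -> D z ->
  b * sqnorm ip (y - z) / 2 = J y + J z - 2 * J (2^-1%:C%C *: (y + z)).
Proof.
move=> Dy Dz; rewrite /J gZ; last exact: D_add.
by rewrite gD // (sqnormZ ipP) (sqnormB ipP) (sqnormD ipP) /=; field.
Qed.

Let minimizing_cauchy (y : nat -> H) :
  (forall n, D (y n) /\ J (y n) < m + n.+1%:R^-1) -> cauchyH ip y.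
Proof.
move=> y_min e e_gt0.
have be2_gt0 : 0 < b * e ^+ 2 / 4 by rewrite divr_gt0 ?mulr_gt0 ?exprn_gt0.
have [N N_small] := inv_succ_lt_eventually be2_gt0.
exists N => k l le_Nk le_Nl; rewrite hnorm_lt // -(ltr_pM2l b_gt0).
have [Dk Jk] := y_min k; have [Dl Jl] := y_min l.
have := J_midpoint Dk Dl; have := J_ge_inf (D_scale 2^-1%:C%C (D_add Dk Dl)).
move: Jk Jl (N_small _ le_Nk) (N_small _ le_Nl).
set dk := k.+1%:R^-1; set dl := l.+1%:R^-1; lra.
Qed.

Let J_shift y p (t : R) : D y -> D p ->
  J (y + t%:C%C *: p) = J y + (2 * b * Re (ip y p) - g p) * t + b * sqnorm ip p * t ^+ 2.
Proof.
move=> Dy Dp; have Dtp := D_scale t%:C%C Dp.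
by rewrite /J gD // gZ // (sqnormD ipP) (sqnormZ ipP) (ipZr ipP) RecM /=; ring.
Qed.

Let first_variation_bound y p : D y -> D p ->
  (2 * b * Re (ip y p) - g p) ^+ 2 <= 4 * (J y - m) * (b * sqnorm ip p).
Proof.
move=> Dy Dp; apply: quadratic_ge0_discr => [|t].
  exact: mulr_ge0 (ltW b_gt0) (sqnorm_ge0 ipP p).
by have := J_ge_inf (D_add Dy (D_scale t%:C%C Dp)); rewrite J_shift //; lra.
Qed.

Let minimizer_limit_repr (y : nat -> H) z p :
  (forall n, D (y n) /\ J (y n) < m + n.+1%:R^-1) -> cvgH ip y z -> D p ->
  g p = 2 * b * Re (ip z p).
Proof.
move=> y_min y_cvg Dp; apply/eqP; rewrite eq_sym -subr_eq0; apply/eqP.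
apply: (@eq0_of_sqr_le_eps _ _ (8 * b * (1 + b) * sqnorm ip p)) => e e_gt0.
have [N1 N1_small] := inv_succ_lt_eventually e_gt0.
have sqrt_gt0 : 0 < Num.sqrt e by rewrite sqrtr_gt0.
have [N2 N2_close] := y_cvg _ sqrt_gt0.
pose n := maxn N1 N2; have [Dn Jn] := y_min n.
have close : sqnorm ip (y n - z) <= e.
  have := N2_close n (leq_maxr _ _); rewrite hnorm_lt // sqr_sqrtr; last exact: ltW.
  exact: ltW.
have var := first_variation_bound Dn Dp.
have cs := Re_ip_sqr_le ipP (y n - z) p; rewrite ipBl // RecD RecN in cs.
have p_ge0 := sqnorm_ge0 ipP p.
have Jn_le : J (y n) - m <= e.
  by move: Jn (N1_small n (leq_maxl _ _)); set d := n.+1%:R^-1; lra.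
have Jn_bP : (J (y n) - m) * (b * sqnorm ip p) <= e * (b * sqnorm ip p).
  by apply: ler_wpM2r => //; apply: mulr_ge0 => //; apply: ltW.
set r := Re (ip (y n) p) - Re (ip z p) in cs *.
have r_sq : b ^+ 2 * r ^+ 2 <= b ^+ 2 * (e * sqnorm ip p).
  by apply: ler_wpM2l; [exact: sqr_ge0 | apply: (le_trans cs); apply: ler_wpM2r].
set c := 2 * b * Re (ip (y n) p) - g p in var *.
have -> : 2 * b * Re (ip z p) - g p = c - 2 * b * r by rewrite /c /r; ring.
have := sqr_ge0 (c + 2 * b * r); nra.
Qed.

Lemma real_functional_ip_repr : exists z, forall p, D p -> g p = Re (ip z p).
Proof.
have [y y_min] := minimizing_seq; have [z y_cvg] := complete (minimizing_cauchy y_min).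
exists ((2 * b)%:C%C *: z) => p Dp.
by rewrite (minimizer_limit_repr y_min y_cvg Dp) (ipZl ipP) RecM /=; ring.
Qed.

End DirichletPrinciple.

Lemma linear_functional_ip_repr (R : realType) (H : lmodType R[i]) (ip : H -> H -> R[i])
    (D : H -> Prop) (f : H -> R[i]) (a b : R) :
  is_inner_product ip -> (forall u, cauchyH ip u -> exists l, cvgH ip u l) ->
  subspace D -> (forall c x y, D x -> D y -> f (c *: x + y) = c * f x + f y) ->
  0 < b -> (forall p, D p -> Re (f p) <= a + b * sqnorm ip p) ->
  exists w, forall p, D p -> f p = ip w p.
Proof.
move=> ipP complete D_subspace f_linear b_gt0 Ref_le; have [D0 D_linear] := D_subspace.
have f0 : f 0 = 0.
  have := f_linear 1 0 0 D0 D0; rewrite scale1r addr0 mul1r => /eqP.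
  by rewrite -subr_eq subrr => /eqP.
have Ref_linear (t : R) x y : D x -> D y -> Re (f (t%:C%C *: x + y)) = t * Re (f x) + Re (f y).
  by move=> Dx Dy; rewrite f_linear // RecD RecM /=; ring.
have [w Ref_repr] := real_functional_ip_repr ipP complete D_subspace Ref_linear b_gt0 Ref_le.
exists w => p Dp; apply: complex_eq; first exact: Ref_repr.
have := Ref_repr _ (D_linear 'i%C p 0 Dp D0).
by rewrite f_linear // f0 !addr0 (ipZr ipP) !RecM /=; lra.
Qed.

Lemma dissipative_extension_bound (R : realType) (H : lmodType R[i]) (ip : H -> H -> R[i])
    (DS : H -> Prop) (S V : H -> H) (DB : H -> Prop) (B : H -> H) (c : R) x p :
  is_inner_product ip -> is_linop DB B -> dissipative ip DB B -> symmetric_op ip DS S ->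
  (forall y, sqnorm ip (V y) <= c * sqnorm ip y) ->
  op_extends DS (fun y => S y + ('i%C : R[i]) *: V y) DB B ->
  DB x -> DS p ->
  Re (ip x (S p))
    <= Im (ip x (B x)) + (sqnorm ip x + sqnorm ip (B x)) / 2 + (1 + c) * sqnorm ip p.
Proof.
move=> ipP [[_ DB_linear] B_linear] B_diss S_sym V_le ext DBx DSp.
have [DBp Bp] := ext p DSp.
have Im_pSp : Im (ip p (S p)) = 0.
  by have := Im_ipJ ipP (S p) p; rewrite S_sym //; lra.
have := B_diss _ (DB_linear (- 'i%C) p x DBp DBx).
rewrite B_linear // Bp.
rewrite !(ipDl ipP, ipDr ipP, ipZl ipP, ipZr ipP) !(ImcD, ImcM, RecD, RecM) /= Im_pSp.
have := Im_ip_le ipP x (V p); have := Re_ip_le ipP p (B x); have := Re_ip_le ipP p (V p).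
have := V_le p; lra.
Qed.

Unset Implicit Arguments.

Theorem lemma6p2 (R : realType) (H : lmodType R[i]) (ip : H -> H -> R[i])
  (DS : H -> Prop) (S : H -> H) (V : H -> H) (DB : H -> Prop) (B : H -> H) :
  is_hilbert ip ->
  is_linop DS S -> densely_defined ip DS -> closed_op ip DS S ->
  symmetric_op ip DS S ->
  bounded_op ip V -> nonneg_op ip V ->
  is_linop DB B ->
  op_extends DS (fun x => S x + ('i%C : R[i]) *: V x) DB B ->
  dissipative ip DB B ->
  forall x, DB x -> adjoint_dom ip DS S x.
Proof.
move=> [ipP complete] [DS_subspace S_linear] _ _ S_sym [_ [M V_bounded]] _
  B_linear ext B_diss x DBx.
have V_le := sqnorm_le_of_hnorm_le ipP V_bounded.
have b_gt0 : 0 < 1 + M ^+ 2 by have := sqr_ge0 M; lra.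
have [w repr] : exists w, forall p, DS p -> ip x (S p) = ip w p.
  apply: (linear_functional_ip_repr ipP complete DS_subspace _ b_gt0).
    by move=> c p q DSp DSq; rewrite S_linear // (ipDr ipP) (ipZr ipP).
  move=> p DSp.
  exact: dissipative_extension_bound ipP B_linear B_diss S_sym V_le ext DBx DSp.
by exists w => p DSp; rewrite (ipJ ipP x) repr // -(ipJ ipP).
Qed.
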